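(* Let $K\ge 1$, $N_t,N_r,N_d\ge1$ be integers, $\sigma_0^2>0$, $P_{\rm BS}>0$, and weights $\omega_1,\dots,\omega_K>0$ with $\sum_k\omega_k=1$. Let $\mathbf{H}_k\in\mathbb{C}^{N_r\times N_t}$ ($k=1,\dots,K$), $\mathbf{H}=[\mathbf{H}_1^{\mathsf T},\dots,\mathbf{H}_K^{\mathsf T}]^{\mathsf T}\in\mathbb{C}^{KN_r\times N_t}$, $\bar{\mathbf{H}}=\mathbf{H}\mathbf{H}^{\mathsf H}\in\mathbb{C}^{KN_r\times KN_r}$ and $\bar{\mathbf{H}}_k=\mathbf{H}_k\mathbf{H}^{\mathsf H}\in\mathbb{C}^{N_r\times KN_r}$. Fix a point $\mathbf{F}^{(n)}=[\mathbf{F}^{(n)}_1,\dots,\mathbf{F}^{(n)}_K]$ with $\mathbf{F}^{(n)}_k\in\mathbb{C}^{KN_r\times N_d}$ and define $\hat{\mathbf{X}}_k=\bar{\mathbf{H}}_k\mathbf{F}_k^{(n)}$, $$\hat{\mathbf{Y}}_k=\sum_{j\neq k}\bar{\mathbf{H}}_k\mathbf{F}_j^{(n)}(\mathbf{F}_j^{(n)})^{\mathsf H}\bar{\mathbf{H}}_k^{\mathsf H}+\frac{\sigma_0^2}{P_{\rm BS}}\sum_{i=1}^K\mathrm{Tr}\big(\bar{\mathbf{H}}\mathbf{F}_i^{(n)}(\mathbf{F}_i^{(n)})^{\mathsf H}\big)\mathbf{I},$$ assumed invertible, $\hat{\mathbf{B}}_k=\hat{\mathbf{X}}_k^{\mathsf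 H}\hat{\mathbf{Y}}_k^{-1}$ and $\hat{\mathbf{A}}_k=\hat{\mathbf{Y}}_k^{-1}-(\hat{\mathbf{X}}_k\hat{\mathbf{X}}_k^{\mathsf H}+\hat{\mathbf{Y}}_k)^{-1}$. For $\mathbf{F}=[\mathbf{F}_1,\dots,\mathbf{F}_K]$, $\mathbf{F}_k\in\mathbb{C}^{KN_r\times N_d}$, define $$g_k(\mathbf{F})=\log\det(\mathbf{I}+\hat{\mathbf{B}}_k\hat{\mathbf{X}}_k)-\mathrm{Tr}(\hat{\mathbf{B}}_k\hat{\mathbf{X}}_k)+2\Re\{\mathrm{Tr}(\hat{\mathbf{B}}_k\bar{\mathbf{H}}_k\mathbf{F}_k)\}-\sum_{j=1}^K\mathrm{Tr}(\mathbf{F}_j^{\mathsf H}\bar{\mathbf{H}}_k^{\mathsf H}\hat{\mathbf{A}}_k^{\mathsf H}\bar{\mathbf{H}}_k\mathbf{F}_j)-\frac{\sigma_0^2}{P_{\rm BS}}\mathrm{Tr}(\hat{\mathbf{A}}_k^{\mathsf H})\sum_{i=1}^K\mathrm{Tr}(\bar{\mathbf{H}}\mathbf{F}_i\mathbf{F}_i^{\mathsf H}).$$ Then the closed-form solution of $\max_{\mathbf{F}}\sum_{k=1}^K\omega_k g_k(\mathbf{F})$ is $$\mathbf{F}=(\mu\mathbf{I}+\tilde{\mathbf{A}}\bar{\mathbf{H}})^{-1}\tilde{\mathbf{B}},$$ where $\tilde{\mathbf{A}}=\mathrm{blkdiag}(\omega_1\hat{\mathbf{A}}_1^{\mathsf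 H},\dots,\omega_K\hat{\mathbf{A}}_K^{\mathsf H})$, $\tilde{\mathbf{B}}=\mathrm{blkdiag}(\omega_1\hat{\mathbf{B}}_1^{\mathsf H},\dots,\omega_K\hat{\mathbf{B}}_K^{\mathsf H})$ and $\mu=\frac{\sigma_0^2}{P_{\rm BS}}\sum_{k=1}^K\omega_k\mathrm{Tr}(\hat{\mathbf{A}}_k^{\mathsf H})$.
   Context: This is the precoder-update subproblem of successive convex approximation for weighted sum-rate maximization in a downlink multiuser MIMO system (with RIS phase shifts fixed), where $\mathbf{H}_k$ is the composite channel to user $k$. $\mathrm{blkdiag}$ denotes the block-diagonal matrix with the given diagonal blocks; $\log$ is the natural logarithm; $^{\mathsf H}$ is conjugate transpose. *)

From HB Require Import structures.
From mathcomp Require Import all_boot all_order all_algebra.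
From mathcomp Require Import complex.
From mathcomp Require Import all_classical all_reals all_analysis.
Set Implicit Arguments. Unset Strict Implicit. Unset Printing Implicit Defensive.
Import Order.TTheory GRing.Theory Num.Theory.
Local Open Scope ring_scope.

Definition adjmx (R : rcfType) m n (A : 'M[R[i]]_(m, n)) : 'M[R[i]]_(n, m) :=
  (map_mx (@conjc R) A)^T.

Section Precoder.
Variables (R : realType) (K Nt Nr Nd : nat).
Local Notation C := (R[i]).
Local Notation KNr := (\sum_(k < K) Nr)%N.
Local Notation KNd := (\sum_(k < K) Nd)%N.
Variables (sigma2 PBS : R) (omega : 'I_K -> R) (Hk : 'I_K -> 'M[C]_(Nr, Nt))
  (F0 : 'I_K -> 'M[C]_(KNr, Nd)).

Definition Hstack : 'M[C]_(KNr, Nt) := \mxcol_(k < K) Hk k.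
Definition Hbar : 'M[C]_KNr := Hstack *m adjmx Hstack.
Definition Hbar_k (k : 'I_K) : 'M[C]_(Nr, KNr) := Hk k *m adjmx Hstack.

Definition rho : C := (sigma2 / PBS)%:C%C.

Definition Xhat (k : 'I_K) : 'M[C]_(Nr, Nd) := Hbar_k k *m F0 k.
Definition Yhat (k : 'I_K) : 'M[C]_Nr :=
  \sum_(j < K | j != k) (Hbar_k k *m F0 j *m adjmx (F0 j) *m adjmx (Hbar_k k))
  + (rho * \sum_(i < K) \tr (Hbar *m F0 i *m adjmx (F0 i)))%:M.
Definition Bhat (k : 'I_K) : 'M[C]_(Nd, Nr) := adjmx (Xhat k) *m invmx (Yhat k).
Definition Ahat (k : 'I_K) : 'M[C]_Nr :=
  invmx (Yhat k) - invmx (Xhat k *m adjmx (Xhat k) + Yhat k).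

(* g_k(F); the log-det is the real log of the (real, positive) determinant,
   and the remaining (real-valued) terms are taken through their real part. *)
Definition g_k (k : 'I_K) (F : 'I_K -> 'M[C]_(KNr, Nd)) : R :=
  ln (complex.Re (\det (1%:M + Bhat k *m Xhat k)))
  + complex.Re (- \tr (Bhat k *m Xhat k)
     + (2 * complex.Re (\tr (Bhat k *m Hbar_k k *m F k)))%:C%C
     - \sum_(j < K) \tr (adjmx (F j) *m adjmx (Hbar_k k) *m adjmx (Ahat k)
                          *m Hbar_k k *m F j)
     - rho * \tr (adjmx (Ahat k)) * \sum_(i < K) \tr (Hbar *m F i *m adjmx (F i))).

Definition objective (F : 'I_K -> 'M[C]_(KNr, Nd)) : R :=
  \sum_(k < K) omega k * g_k k F.

Definition Atilde : 'M[C]_KNr :=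
  \mxblock_(i < K, j < K) (if i == j then (omega i)%:C%C *: adjmx (Ahat i) else 0 : 'M[C]_(Nr, Nr)).
Definition Btilde : 'M[C]_(KNr, KNd) :=
  \mxblock_(i < K, j < K) (if i == j then (omega i)%:C%C *: adjmx (Bhat i) else 0 : 'M[C]_(Nr, Nd)).
Definition mu : C := rho * \sum_(k < K) (omega k)%:C%C * \tr (adjmx (Ahat k)).

Definition Fopt : 'M[C]_(KNr, KNd) := invmx (mu%:M + Atilde *m Hbar) *m Btilde.
Definition Fopt_blocks (k : 'I_K) : 'M[C]_(KNr, Nd) := submxrow Fopt k.
End Precoder.

(* Up to a constant, the weighted objective equals
   sum_j (2 Re tr(L_j^H F_j) - Re tr(F_j^H G F_j)) with L_j = w_j Hbar_j^H Bhat_j^H and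
   G = sum_k w_k Hbar_k^H Ahat_k^H Hbar_k + mu Hbar = Hbar Atilde Hbar + mu Hbar.
   Since Yhat_k is a positive semidefinite interference term plus a positive multiple of I,
   Ahat_k = Yhat_k^-1 - (Xhat_k Xhat_k^H + Yhat_k)^-1 is Hermitian positive semidefinite, hence
   so is G, and any F with G F_j = L_j maximizes this concave quadratic. Finally
   G = Hbar (mu I + Atilde Hbar) and Hbar Btilde = [L_1, ..., L_K], so the closed form solves
   these equations when mu <> 0; and mu = 0 forces every Xhat_k, hence every Ahat_k and
   Bhat_k, to vanish. *)

From HB Require Import structures.
From mathcomp Require Import all_boot all_order all_algebra.
From mathcomp Require Import complex.
From mathcomp Require Import all_classical all_reals all_analysis.
From mathcomp Require Import lra.
Set Implicit Arguments.
Unset Strict Implicit.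
Unset Printing Implicit Defensive.
Import Order.TTheory GRing.Theory Num.Theory.
Local Open Scope ring_scope.

Lemma unitmx_inj (F : fieldType) n (A : 'M[F]_n) :
  (forall v : 'cV_n, A *m v = 0 -> v = 0) -> A \in unitmx.
Proof.
move=> A_inj; rewrite -unitmx_tr unitmxE unitfE; apply/negP => /det0P [v v_neq0 vA0].
have /A_inj /(congr1 trmx) : A *m v^T = 0 by rewrite -(trmxK A) -trmx_mul vA0 trmx0.
by rewrite trmxK trmx0 => v0; rewrite v0 eqxx in v_neq0.
Qed.

(* Y^-1 - Z^-1 = Z^-1 P Y^-1 for Z = P + Y, and Y^-1 = Y^-1 Z Z^-1 = (1 + Y^-1 P) Z^-1. *)
Lemma invmx_sub_addl (F : comUnitRingType) n (P Y : 'M[F]_n) :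
  Y \in unitmx -> P + Y \in unitmx ->
  invmx Y - invmx (P + Y) = invmx (P + Y) *m P *m invmx (P + Y)
    + invmx (P + Y) *m P *m invmx Y *m P *m invmx (P + Y).
Proof.
set Z := P + Y => uY uZ.
have PE : P = Z - Y by rewrite /Z addrK.
have -> : invmx Y - invmx Z = invmx Z *m P *m invmx Y.
  by rewrite PE mulmxBr mulmxBl mulVmx // mul1mx -mulmxA mulmxV // mulmx1.
rewrite -[LHS]mulmx1 -(mulmxV uZ) mulmxA.
have -> : invmx Z *m P *m invmx Y *m Z = invmx Z *m P + invmx Z *m P *m invmx Y *m P.
  by rewrite {2}/Z mulmxDr -[_ *m invmx Y *m Y]mulmxA mulVmx // mulmx1 addrC.
by rewrite mulmxDl.
Qed.

Section ConjugateTranspose.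
Variable R : rcfType.
Local Notation C := R[i].

Lemma conjc_ge0 (c : C) : 0 <= c -> c^*%C = c.
Proof. by case: c => a b; rewrite lecE /= => /andP[/eqP -> _]; rewrite oppr0. Qed.

Fact adjmx_is_zmod_morphism m n : zmod_morphism (@adjmx R m n).
Proof. by move=> A B; apply/matrixP=> i j; rewrite !mxE rmorphB. Qed.
HB.instance Definition _ m n :=
  GRing.isZmodMorphism.Build 'M[C]_(m, n) 'M[C]_(n, m) (@adjmx R m n)
    (@adjmx_is_zmod_morphism m n).

Lemma adjmxK m n (A : 'M[C]_(m, n)) : adjmx (adjmx A) = A.
Proof. by apply/matrixP=> i j; rewrite !mxE conjcK. Qed.

Lemma adjmxM m n p (A : 'M[C]_(m, n)) (B : 'M[C]_(n, p)) :
  adjmx (A *m B) = adjmx B *m adjmx A.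
Proof. by rewrite /adjmx map_mxM trmx_mul. Qed.

Lemma adjmx_gram m n (A : 'M[C]_(m, n)) : adjmx (A *m adjmx A) = A *m adjmx A.
Proof. by rewrite adjmxM adjmxK. Qed.

Lemma adjmxZ m n a (A : 'M[C]_(m, n)) : adjmx (a *: A) = a^*%C *: adjmx A.
Proof. by apply/matrixP=> i j; rewrite !mxE rmorphM. Qed.

Lemma adjmx_scalar n a : adjmx (a%:M : 'M[C]_n) = a^*%C%:M.
Proof. by apply/matrixP=> i j; rewrite !mxE eq_sym rmorphMn. Qed.

Lemma adjmxV n (A : 'M[C]_n) : adjmx (invmx A) = invmx (adjmx A).
Proof. by rewrite /adjmx map_invmx trmx_inv. Qed.

Lemma mxtrace_adjmx n (A : 'M[C]_n) : \tr (adjmx A) = (\tr A)^*%C.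
Proof.
by rewrite /adjmx mxtrace_tr /mxtrace rmorph_sum; apply: eq_bigr => i _; rewrite mxE.
Qed.

Lemma mxtrace_gram_ge0 m n (D : 'M[C]_(m, n)) : 0 <= \tr (adjmx D *m D).
Proof.
apply: sumr_ge0 => i _; rewrite mxE; apply: sumr_ge0 => k _.
by rewrite !mxE mulrC mulcJ_ge0.
Qed.

Lemma mxtrace_gram_eq0 m n (D : 'M[C]_(m, n)) : \tr (adjmx D *m D) = 0 -> D = 0.
Proof.
have entry_ge0 i k : 0 <= (adjmx D) i k * D k i by rewrite !mxE mulrC mulcJ_ge0.
move/eqP; rewrite psumr_eq0 => [/allP D0|i _]; last first.
  by rewrite mxE; apply: sumr_ge0.
apply/matrixP => k i; move: (D0 i (mem_index_enum i)); rewrite implyTb mxE.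
rewrite psumr_eq0 // => /allP /(_ k (mem_index_enum k)).
by rewrite implyTb !mxE mulf_eq0 conjc_eq0 orbb => /eqP ->.
Qed.

End ConjugateTranspose.

Section PositiveSemidefinite.
Variable R : rcfType.
Local Notation C := R[i].

(* Tested against all matrices D, not only vectors; Hermitian symmetry is a separate
   hypothesis wherever it is needed. *)
Definition psdmx n (P : 'M[C]_n) :=
  forall m (D : 'M[C]_(n, m)), 0 <= \tr (adjmx D *m P *m D).
Arguments psdmx {n}.

Lemma psdmx_tr n (P : 'M[C]_n) : psdmx P -> 0 <= \tr P.
Proof. by move=> /(_ n 1%:M); rewrite mulmx1 adjmx_scalar conjc1 mul1mx. Qed.

Lemma psdmx_gram n p (E : 'M[C]_(n, p)) : psdmx (E *m adjmx E).
Proof.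
move=> m D.
have -> : adjmx D *m (E *m adjmx E) *m D = adjmx (adjmx E *m D) *m (adjmx E *m D).
  by rewrite adjmxM adjmxK !mulmxA.
exact: mxtrace_gram_ge0.
Qed.

Lemma psdmx_congr n p (E : 'M[C]_(p, n)) P : psdmx P -> psdmx (adjmx E *m P *m E).
Proof.
move=> P_psd m D.
have -> : adjmx D *m (adjmx E *m P *m E) *m D = adjmx (E *m D) *m P *m (E *m D).
  by rewrite adjmxM !mulmxA.
exact: P_psd.
Qed.

Lemma psdmxD n (P Q : 'M[C]_n) : psdmx P -> psdmx Q -> psdmx (P + Q).
Proof. by move=> P_psd Q_psd m D; rewrite mulmxDr mulmxDl mxtraceD addr_ge0. Qed.

Lemma psdmxZ n (P : 'M[C]_n) c : 0 <= c -> psdmx P -> psdmx (c *: P).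
Proof. by move=> c_ge0 P_psd m D; rewrite -scalemxAr -scalemxAl mxtraceZ mulr_ge0. Qed.

Lemma psdmx_sum n (I : finType) (r : pred I) (P : I -> 'M[C]_n) :
  (forall i, r i -> psdmx (P i)) -> psdmx (\sum_(i | r i) P i).
Proof.
move=> P_psd; apply: (big_ind psdmx) => // [m D|]; last exact: psdmxD.
by rewrite mulmx0 mul0mx mxtrace0.
Qed.

Lemma psdmx_scalar n (c : C) : 0 <= c -> psdmx (c%:M : 'M[C]_n).
Proof.
by move=> c_ge0 m D; rewrite mul_mx_scalar -scalemxAl mxtraceZ mulr_ge0 ?mxtrace_gram_ge0.
Qed.

Lemma psdmx_invmx n (Y : 'M[C]_n) :
  adjmx Y = Y -> psdmx Y -> Y \in unitmx -> psdmx (invmx Y).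
Proof.
move=> Y_herm Y_psd Y_unit.
have -> : invmx Y = adjmx (invmx Y) *m Y *m invmx Y.
  by rewrite adjmxV Y_herm mulVmx // mul1mx.
exact: psdmx_congr.
Qed.

Lemma psdmx_addr_scalar_unitmx n (P : 'M[C]_n) (r : C) :
  psdmx P -> 0 < r -> P + r%:M \in unitmx.
Proof.
move=> P_psd r_gt0; apply: unitmx_inj => v Pv0.
have : \tr (adjmx v *m (P + r%:M) *m v) = 0 by rewrite -mulmxA Pv0 mulmx0 mxtrace0.
rewrite mulmxDr mulmxDl mxtraceD mul_mx_scalar -scalemxAl mxtraceZ => /eqP.
rewrite paddr_eq0 ?mulr_ge0 ?mxtrace_gram_ge0 ?(ltW r_gt0) //.
by case/andP=> _; rewrite mulf_eq0 gt_eqF //= => /eqP /mxtrace_gram_eq0.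
Qed.

End PositiveSemidefinite.
Arguments psdmx {R n}.

Section InverseDifference.
Variables (R : rcfType) (n p : nat).
Variables (S : 'M[R[i]]_n) (X : 'M[R[i]]_(n, p)) (r : R[i]).
Hypotheses (S_herm : adjmx S = S) (S_psd : psdmx S) (r_gt0 : 0 < r).
Local Notation Y := (S + r%:M).
Local Notation Z := (X *m adjmx X + Y).

Let Y_herm : adjmx Y = Y.
Proof. by rewrite raddfD /= S_herm adjmx_scalar conjc_ge0 // ltW. Qed.

Let Z_herm : adjmx Z = Z.
Proof. by rewrite raddfD /= adjmxM adjmxK Y_herm. Qed.

Let Y_psd : psdmx Y.
Proof. by apply: psdmxD => //; apply: psdmx_scalar; apply: ltW. Qed.

Let Y_unit : Y \in unitmx.
Proof. exact: psdmx_addr_scalar_unitmx. Qed.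

Let Z_unit : Z \in unitmx.
Proof.
rewrite addrA; apply: psdmx_addr_scalar_unitmx => //.
by apply: psdmxD => //; apply: psdmx_gram.
Qed.

Let E1 := adjmx X *m invmx Z.
Let E2 := X *m adjmx X *m invmx Z.

Let invmx_sub_gram : invmx Y - invmx Z = adjmx E1 *m E1 + adjmx E2 *m invmx Y *m E2.
Proof.
by rewrite invmx_sub_addl // /E1 /E2 !adjmxM adjmxV Z_herm adjmxK !mulmxA.
Qed.

Lemma adjmx_invmx_sub : adjmx (invmx Y - invmx Z) = invmx Y - invmx Z.
Proof. by rewrite raddfB /= !adjmxV Y_herm Z_herm. Qed.

Lemma psdmx_invmx_sub : psdmx (invmx Y - invmx Z).
Proof.
rewrite invmx_sub_gram; apply: psdmxD; last exact/psdmx_congr/psdmx_invmx.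
by have := psdmx_gram (adjmx E1); rewrite adjmxK.
Qed.

Lemma mxtrace_invmx_sub_eq0 : \tr (invmx Y - invmx Z) = 0 -> X = 0.
Proof.
have E2_ge0 : 0 <= \tr (adjmx E2 *m invmx Y *m E2) by exact: psdmx_invmx.
rewrite invmx_sub_gram mxtraceD => /eqP; rewrite paddr_eq0 ?mxtrace_gram_ge0 //.
case/andP => /eqP /mxtrace_gram_eq0 E1_0 _.
by rewrite -[X]adjmxK -[adjmx X](mulmxKV Z_unit) -/E1 E1_0 mul0mx raddf0.
Qed.

End InverseDifference.

Section ConcaveQuadratic.
Variable R : rcfType.
Local Notation C := R[i].

Lemma Re_conjc (z : C) : complex.Re z^*%C = complex.Re z.
Proof. by case: z. Qed.

Lemma Re_ge0 (z : C) : 0 <= z -> 0 <= complex.Re z.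
Proof. by rewrite lecE => /andP[]. Qed.

Lemma Re_sum (I : finType) (f : I -> C) :
  complex.Re (\sum_i f i) = \sum_i complex.Re (f i).
Proof. exact: raddf_sum. Qed.

Lemma Re_realM (x : R) (z : C) : complex.Re (x%:C%C * z) = x * complex.Re z.
Proof. by case: z => a b /=; rewrite mul0r subr0. Qed.

Definition quad_form n m (G : 'M[C]_n) (L X : 'M[C]_(n, m)) : R :=
  2 * complex.Re (\tr (adjmx L *m X)) - complex.Re (\tr (adjmx X *m G *m X)).

Lemma quad_form_max n m (G : 'M[C]_n) (L Xs X : 'M[C]_(n, m)) :
  adjmx G = G -> psdmx G -> G *m Xs = L -> quad_form G L X <= quad_form G L Xs.
Proof.
move=> G_herm G_psd <-; rewrite /quad_form adjmxM G_herm.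
have cross : complex.Re (\tr (adjmx X *m G *m Xs)) = complex.Re (\tr (adjmx Xs *m G *m X)).
  by rewrite -Re_conjc -mxtrace_adjmx !adjmxM adjmxK G_herm mulmxA.
have := Re_ge0 (G_psd _ (X - Xs)).
rewrite [adjmx _]raddfB /= !(mulmxBl, mulmxBr) !raddfB /= cross.
lra.
Qed.

End ConcaveQuadratic.

Section BlockDiagonal.
Variables (R : rcfType) (K p q : nat).
Local Notation C := R[i].
Variable (A : 'I_K -> 'M[C]_(p, q)).
Local Notation blkdiag D := (\mxblock_(i < K, j < K) (if i == j then D i else 0)).

Lemma adjmx_mxcol : adjmx (\mxcol_(k < K) A k) = \mxrow_(k < K) adjmx (A k).
Proof. by apply/matrixP => i j; rewrite !mxE. Qed.

Lemma mulmx_adjmx_mxcol_blkdiag r (D : 'I_K -> 'M[C]_(p, r)) :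
  adjmx (\mxcol_(k < K) A k) *m blkdiag D = \mxrow_(k < K) (adjmx (A k) *m D k).
Proof.
rewrite adjmx_mxcol mul_mxrow_mxblock; apply: eq_mxrow => j.
by rewrite (bigD1 j) //= eqxx big1 ?addr0 // => i /negbTE ->; rewrite mulmx0.
Qed.

Lemma adjmx_mxcol_blkdiag_mxcol (D : 'I_K -> 'M[C]_p) :
  adjmx (\mxcol_(k < K) A k) *m blkdiag D *m \mxcol_(k < K) A k
  = \sum_(k < K) adjmx (A k) *m D k *m A k.
Proof. by rewrite mulmx_adjmx_mxcol_blkdiag mul_mxrow_mxcol. Qed.

Lemma adjmx_mxcol_submxrow_blkdiag r (D : 'I_K -> 'M[C]_(p, r)) j :
  adjmx (\mxcol_(k < K) A k) *m submxrow (blkdiag D) j = adjmx (A j) *m D j.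
Proof. by rewrite mul_submxrow mulmx_adjmx_mxcol_blkdiag mxrowK. Qed.

End BlockDiagonal.

Section PrecoderUpdate.
Variables (R : realType) (K Nt Nr Nd : nat) (sigma2 PBS : R) (omega : 'I_K -> R).
Variables (Hk : 'I_K -> 'M[R[i]]_(Nr, Nt)) (F0 : 'I_K -> 'M[R[i]]_(\sum_(k < K) Nr, Nd)).
Hypotheses (sigma2_gt0 : 0 < sigma2) (PBS_gt0 : 0 < PBS) (Nr_gt0 : (0 < Nr)%N).
Hypotheses (omega_gt0 : forall k, 0 < omega k).
Hypothesis Yhat_unit : forall k, Yhat sigma2 PBS Hk F0 k \in unitmx.

Local Notation C := R[i].
Local Notation KNr := (\sum_(k < K) Nr)%N.
Local Notation Hstack := (Hstack Hk).
Local Notation Hbar := (Hbar Hk).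
Local Notation Hbar_k := (Hbar_k Hk).
Local Notation rho := (rho sigma2 PBS).
Local Notation Xhat := (Xhat Hk F0).
Local Notation Yhat := (Yhat sigma2 PBS Hk F0).
Local Notation Ahat := (Ahat sigma2 PBS Hk F0).
Local Notation Bhat := (Bhat sigma2 PBS Hk F0).
Local Notation mu := (mu sigma2 PBS omega Hk F0).
Local Notation Atilde := (Atilde sigma2 PBS omega Hk F0).
Local Notation Btilde := (Btilde sigma2 PBS omega Hk F0).
Local Notation g_k := (g_k sigma2 PBS Hk F0).

Lemma mxtrace_Hbar_gram m (F : 'M[C]_(KNr, m)) :
  \tr (Hbar *m F *m adjmx F) = \tr (adjmx (adjmx Hstack *m F) *m (adjmx Hstack *m F)).
Proof. by rewrite adjmxM adjmxK mxtrace_mulC !mulmxA. Qed.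

Definition tx_power : C := \sum_(i < K) \tr (Hbar *m F0 i *m adjmx (F0 i)).

Definition interference k : 'M[C]_Nr :=
  \sum_(j < K | j != k) Hbar_k k *m F0 j *m adjmx (Hbar_k k *m F0 j).

Lemma YhatE k : Yhat k = interference k + (rho * tx_power)%:M.
Proof.
by congr (_ + _); apply: eq_bigr => j _; rewrite [adjmx (_ *m F0 j)]adjmxM !mulmxA.
Qed.

Lemma interference_herm k : adjmx (interference k) = interference k.
Proof. by rewrite raddf_sum /=; apply: eq_bigr => j _; rewrite adjmx_gram. Qed.

Lemma interference_psd k : psdmx (interference k).
Proof. by apply: psdmx_sum => j _; apply: psdmx_gram. Qed.

Lemma rho_gt0 : 0 < rho.
Proof. by rewrite ltcR divr_gt0. Qed.

Lemma rho_tx_power_gt0 (k : 'I_K) : 0 < rho * tx_power.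
Proof.
have tr_ge0 i : 0 <= \tr (Hbar *m F0 i *m adjmx (F0 i)).
  by rewrite mxtrace_Hbar_gram mxtrace_gram_ge0.
rewrite pmulr_rgt0 ?rho_gt0 // lt_def sumr_ge0 // andbT; apply/eqP => tx0.
have HF0 i : adjmx Hstack *m F0 i = 0.
  apply: mxtrace_gram_eq0; rewrite -mxtrace_Hbar_gram; apply/eqP.
  by move/eqP: tx0; rewrite psumr_eq0 // => /allP /(_ i (mem_index_enum i)).
have Y0 : Yhat k = 0.
  rewrite YhatE tx0 mulr0 raddf0 addr0 /interference big1 // => j _.
  by rewrite /Hbar_k -[Hk k *m _ *m F0 j]mulmxA HF0 mulmx0 mul0mx.
have := mulVmx (Yhat_unit k); rewrite Y0 mulmx0.
move/matrixP/(_ (Ordinal Nr_gt0) (Ordinal Nr_gt0)); rewrite !mxE eqxx /=.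
by move/eqP; rewrite eq_sym oner_eq0.
Qed.

Lemma Ahat_herm k : adjmx (Ahat k) = Ahat k.
Proof.
rewrite /Ahat YhatE; apply: adjmx_invmx_sub (rho_tx_power_gt0 k).
exact: interference_herm.
Qed.

Lemma Ahat_psd k : psdmx (Ahat k).
Proof.
rewrite /Ahat YhatE; apply: psdmx_invmx_sub (rho_tx_power_gt0 k).
  exact: interference_herm.
exact: interference_psd.
Qed.

Lemma mxtrace_Ahat_eq0 k : \tr (Ahat k) = 0 -> Xhat k = 0.
Proof.
rewrite /Ahat YhatE; apply: mxtrace_invmx_sub_eq0 (rho_tx_power_gt0 k).
  exact: interference_herm.
exact: interference_psd.
Qed.

Lemma mxtrace_adjmx_Ahat_ge0 k : 0 <= \tr (adjmx (Ahat k)).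
Proof. by rewrite Ahat_herm; apply/psdmx_tr/Ahat_psd. Qed.

Lemma omegaC_ge0 k : 0 <= (omega k)%:C%C.
Proof. by rewrite ler0c; apply/ltW/omega_gt0. Qed.

Lemma mu_ge0 : 0 <= mu.
Proof.
apply: mulr_ge0; first exact/ltW/rho_gt0.
by apply: sumr_ge0 => k _; rewrite mulr_ge0 ?omegaC_ge0 ?mxtrace_adjmx_Ahat_ge0.
Qed.

Lemma mu_eq0_Xhat : mu = 0 -> forall k, Xhat k = 0.
Proof.
move/eqP; rewrite mulf_eq0 gt_eqF ?rho_gt0 //= psumr_eq0 => [/allP w0 k|k _]; last first.
  by rewrite mulr_ge0 ?omegaC_ge0 ?mxtrace_adjmx_Ahat_ge0.
have omega_k_gt0 : 0 < (omega k)%:C%C by rewrite ltcR.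
apply: mxtrace_Ahat_eq0; move: (w0 k (mem_index_enum k)).
by rewrite implyTb mulf_eq0 (gt_eqF omega_k_gt0) Ahat_herm => /eqP.
Qed.

Lemma Hbar_herm : adjmx Hbar = Hbar.
Proof. exact: adjmx_gram. Qed.

Lemma Hbar_Atilde_HbarE : Hbar *m Atilde *m Hbar
  = \sum_(k < K) (omega k)%:C%C *: (adjmx (Hbar_k k) *m adjmx (Ahat k) *m Hbar_k k).
Proof.
have -> : Hbar *m Atilde *m Hbar
    = Hstack *m (adjmx Hstack *m Atilde *m Hstack) *m adjmx Hstack by rewrite /Hbar !mulmxA.
rewrite [adjmx Hstack *m _ *m _]adjmx_mxcol_blkdiag_mxcol mulmx_sumr mulmx_suml.
apply: eq_bigr => k _; rewrite -scalemxAr -scalemxAl -scalemxAr -scalemxAl.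
by rewrite /Hbar_k adjmxM adjmxK !mulmxA.
Qed.

Lemma Hbar_Atilde_Hbar_herm : adjmx (Hbar *m Atilde *m Hbar) = Hbar *m Atilde *m Hbar.
Proof.
rewrite Hbar_Atilde_HbarE raddf_sum /=; apply: eq_bigr => k _.
by rewrite adjmxZ conjc_real !adjmxM !adjmxK Ahat_herm !mulmxA.
Qed.

Lemma Hbar_Atilde_Hbar_psd : psdmx (Hbar *m Atilde *m Hbar).
Proof.
rewrite Hbar_Atilde_HbarE; apply: psdmx_sum => k _.
by apply: psdmxZ (omegaC_ge0 k) _; apply/psdmx_congr; rewrite Ahat_herm; exact: Ahat_psd.
Qed.

Definition obj_quad_mx : 'M[C]_KNr := Hbar *m Atilde *m Hbar + mu *: Hbar.

Definition obj_lin_mx j : 'M[C]_(KNr, Nd) :=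
  (omega j)%:C%C *: (adjmx (Hbar_k j) *m adjmx (Bhat j)).

Definition obj_const : R := \sum_(k < K) omega k *
  (ln (complex.Re (\det (1%:M + Bhat k *m Xhat k))) - complex.Re (\tr (Bhat k *m Xhat k))).

Lemma g_kE k (F : 'I_K -> 'M[C]_(KNr, Nd)) : g_k k F =
  ln (complex.Re (\det (1%:M + Bhat k *m Xhat k))) - complex.Re (\tr (Bhat k *m Xhat k))
  + 2 * complex.Re (\tr (Bhat k *m Hbar_k k *m F k))
  - complex.Re (\sum_(j < K) \tr (adjmx (F j) *m adjmx (Hbar_k k) *m adjmx (Ahat k)
                                   *m Hbar_k k *m F j)
      + rho * \tr (adjmx (Ahat k)) * \sum_(i < K) \tr (Hbar *m F i *m adjmx (F i))).
Proof. by rewrite /g_k !raddfB !raddfD raddfN /=; lra. Qed.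

Lemma objective_linear_part (F : 'I_K -> 'M[C]_(KNr, Nd)) :
  \sum_(k < K) omega k * (2 * complex.Re (\tr (Bhat k *m Hbar_k k *m F k)))
  = \sum_(j < K) 2 * complex.Re (\tr (adjmx (obj_lin_mx j) *m F j)).
Proof.
apply: eq_bigr => k _; rewrite adjmxZ conjc_real adjmxM !adjmxK -scalemxAl mxtraceZ.
by rewrite Re_realM mulrCA.
Qed.

Lemma objective_quadratic_part (F : 'I_K -> 'M[C]_(KNr, Nd)) :
  \sum_(k < K) omega k * complex.Re
     (\sum_(j < K) \tr (adjmx (F j) *m adjmx (Hbar_k k) *m adjmx (Ahat k)
                         *m Hbar_k k *m F j)
      + rho * \tr (adjmx (Ahat k)) * \sum_(i < K) \tr (Hbar *m F i *m adjmx (F i)))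
  = \sum_(j < K) complex.Re (\tr (adjmx (F j) *m obj_quad_mx *m F j)).
Proof.
under eq_bigr do rewrite -Re_realM; rewrite -!Re_sum; congr complex.Re.
have power_sum : \sum_(i < K) \tr (Hbar *m F i *m adjmx (F i))
    = \sum_(j < K) \tr (adjmx (F j) *m Hbar *m F j).
  by apply: eq_bigr => i _; rewrite mxtrace_mulC mulmxA.
have quad_j j : \tr (adjmx (F j) *m obj_quad_mx *m F j)
    = \sum_(k < K) (omega k)%:C%C
        * \tr (adjmx (F j) *m adjmx (Hbar_k k) *m adjmx (Ahat k) *m Hbar_k k *m F j)
      + mu * \tr (adjmx (F j) *m Hbar *m F j).
  rewrite mulmxDr mulmxDl mxtraceD Hbar_Atilde_HbarE mulmx_sumr mulmx_suml raddf_sum /=.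
  rewrite -scalemxAr -scalemxAl mxtraceZ; congr (_ + _); apply: eq_bigr => k _.
  by rewrite -scalemxAr -scalemxAl mxtraceZ !mulmxA.
have mu_power : mu * \sum_(j < K) \tr (adjmx (F j) *m Hbar *m F j)
    = \sum_(k < K) (omega k)%:C%C * (rho * \tr (adjmx (Ahat k))
        * \sum_(i < K) \tr (Hbar *m F i *m adjmx (F i))).
  rewrite -power_sum /mu -mulrA mulr_suml mulr_sumr; apply: eq_bigr => k _.
  by rewrite !mulrA [rho * _]mulrC.
under eq_bigr do rewrite mulrDr mulr_sumr.
rewrite big_split [in LHS]exchange_big (eq_bigr _ (fun j _ => quad_j j)) big_split.
by rewrite -mulr_sumr mu_power.
Qed.

Lemma objectiveE (F : 'I_K -> 'M[C]_(KNr, Nd)) :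
  objective sigma2 PBS omega Hk F0 F
  = obj_const + \sum_(j < K) quad_form obj_quad_mx (obj_lin_mx j) (F j).
Proof.
rewrite /objective (eq_bigr _ (fun k _ => congr1 _ (g_kE k F))).
under eq_bigr do rewrite mulrBr mulrDr.
rewrite sumrB big_split /= objective_linear_part objective_quadratic_part.
by rewrite /quad_form sumrB addrA.
Qed.

Lemma obj_quad_mx_herm : adjmx obj_quad_mx = obj_quad_mx.
Proof.
by rewrite raddfD /= Hbar_Atilde_Hbar_herm adjmxZ (conjc_ge0 mu_ge0) Hbar_herm.
Qed.

Lemma obj_quad_mx_psd : psdmx obj_quad_mx.
Proof.
by apply: psdmxD Hbar_Atilde_Hbar_psd _; apply: psdmxZ mu_ge0 _; apply: psdmx_gram.
Qed.

Lemma obj_quad_mxE : obj_quad_mx = Hbar *m (mu%:M + Atilde *m Hbar).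
Proof. by rewrite mulmxDr mul_mx_scalar mulmxA addrC. Qed.

Lemma Hbar_Btilde j : Hbar *m submxrow Btilde j = obj_lin_mx j.
Proof.
rewrite /Hbar -mulmxA [adjmx Hstack *m _]adjmx_mxcol_submxrow_blkdiag.
by rewrite /obj_lin_mx !scalemxAr /Hbar_k [adjmx (Hk j *m _)]adjmxM adjmxK mulmxA.
Qed.

Lemma precoder_unitmx : mu != 0 -> mu%:M + Atilde *m Hbar \in unitmx.
Proof.
move=> mu_neq0; apply: unitmx_inj => v Wv0.
have : \tr (adjmx v *m obj_quad_mx *m v) = 0.
  by rewrite obj_quad_mxE -!mulmxA Wv0 !mulmx0 mxtrace0.
have G_ge0 := Hbar_Atilde_Hbar_psd v.
have muH_ge0 := mulr_ge0 mu_ge0 (psdmx_gram Hstack v).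
rewrite mulmxDr mulmxDl mxtraceD -scalemxAr -scalemxAl mxtraceZ => /eqP.
rewrite paddr_eq0 //.
case/andP => _; rewrite mulf_eq0 (negbTE mu_neq0) /= /Hbar => /eqP.
have -> : adjmx v *m (Hstack *m adjmx Hstack) *m v
    = adjmx (adjmx Hstack *m v) *m (adjmx Hstack *m v) by rewrite adjmxM adjmxK !mulmxA.
move/mxtrace_gram_eq0 => HHv0.
have : (mu%:M + Atilde *m Hbar) *m v = mu *: v.
  by rewrite mulmxDl mul_scalar_mx /Hbar -!mulmxA HHv0 !mulmx0 addr0.
by rewrite Wv0 => /esym/eqP; rewrite scalemx_eq0 (negbTE mu_neq0) => /eqP.
Qed.

Lemma obj_quad_mx_Fopt j :
  obj_quad_mx *m Fopt_blocks sigma2 PBS omega Hk F0 j = obj_lin_mx j.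
Proof.
(* invmx returns singular matrices unchanged, so mu = 0 needs Btilde = 0. *)
have [mu0|mu_neq0] := eqVneq mu 0; last first.
  rewrite /Fopt_blocks /Fopt -mul_submxrow obj_quad_mxE -mulmxA.
  by rewrite (mulKVmx (precoder_unitmx mu_neq0)) Hbar_Btilde.
have X0 := mu_eq0_Xhat mu0.
have A0 k : Ahat k = 0 by rewrite /Ahat X0 raddf0 mulmx0 add0r subrr.
have B0 k : Bhat k = 0 by rewrite /Bhat X0 raddf0 mul0mx.
rewrite /obj_lin_mx B0 raddf0 mulmx0 scaler0 /obj_quad_mx mu0 scale0r addr0.
suff -> : Hbar *m Atilde *m Hbar = 0 by rewrite mul0mx.
by rewrite Hbar_Atilde_HbarE; apply: big1 => k _; rewrite A0 raddf0 mulmx0 mul0mx scaler0.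
Qed.

End PrecoderUpdate.

Theorem theorem1 (R : realType) (K Nt Nr Nd : nat) (sigma2 PBS : R)
  (omega : 'I_K -> R) (Hk : 'I_K -> 'M[R[i]]_(Nr, Nt))
  (F0 : 'I_K -> 'M[R[i]]_(\sum_(k < K) Nr, Nd)) :
  (0 < K)%N -> (0 < Nt)%N -> (0 < Nr)%N -> (0 < Nd)%N ->
  0 < sigma2 -> 0 < PBS ->
  (forall k, 0 < omega k) -> \sum_(k < K) omega k = 1 ->
  (forall k, Yhat sigma2 PBS Hk F0 k \in unitmx) ->
  forall F : 'I_K -> 'M[R[i]]_(\sum_(k < K) Nr, Nd),
    objective sigma2 PBS omega Hk F0 F
    <= objective sigma2 PBS omega Hk F0 (Fopt_blocks sigma2 PBS omega Hk F0).
Proof.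
move=> _ _ Nr_gt0 _ sigma2_gt0 PBS_gt0 omega_gt0 _ Yhat_unit F.
rewrite !objectiveE lerD2l; apply: ler_sum => j _.
apply: quad_form_max; [exact: obj_quad_mx_herm | exact: obj_quad_mx_psd |].
exact: obj_quad_mx_Fopt.
Qed.
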